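(* Let $G$ be a finite graph. The following are equivalent: (1) $G$ is a König–Egerváry graph; (2) there is a non-empty HKE set-system $F\subseteq\Omega(G)$ such that there is a matching in $G$ between $V(G)-\bigcup F$ and $\bigcap F$ (i.e. a matching $M$ saturating every vertex of $V(G)-\bigcup F$, each matched to a distinct vertex of $\bigcap F$), and $|\bigcap\Gamma_1-\bigcup\Gamma_2|=|\bigcap\Gamma_2-\bigcup\Gamma_1|$ for every two non-empty disjoint subfamilies $\Gamma_1,\Gamma_2\subseteq F$; (3) there is a non-empty HKE set-system $F\subseteq\Omega(G)$ with a matching between $V(G)-\bigcup F$ and $\bigcap F$ as in (2), and $|\bigcap\Gamma_1-\bigcup\Gamma_2|=|\bigcap\Gamma_2-\bigcup\Gamma_1|$ for every two non-empty disjoint subfamilies $\Gamma_1,\Gamma_2\subseteq F$ with $\Gamma_1\cup\Gamma_2=F$.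
   Context: For a graph $G$, $\alpha(G)$ is the maximum size of an independent set, $\mu(G)$ is the matching number, and $\Omega(G)$ is the family of all maximum independent sets of $G$. $G$ is a König–Egerváry (KE) graph if $\alpha(G)+\mu(G)=|V(G)|$. A set-system $F$ (non-empty finite family of finite non-empty sets) is a hereditary König–Egerváry (HKE) set-system if there is a positive integer $\alpha$ such that $|\bigcup\Gamma|+|\bigcap\Gamma|=2\alpha$ for every non-empty subfamily $\Gamma\subseteq F$. Graphs are assumed to have at least one vertex. *)

(* A finite simple graph is a symmetric irreflexive relation
   e : rel T on a finite type T of vertices. *)
From HB Require Import structures.
From mathcomp Require Import all_boot.
Set Implicit Arguments. Unset Strict Implicit. Unset Printing Implicit Defensive.

Section Graphs.
Variables (T : finType) (e : rel T).

Definition independent (A : {set T}) : bool :=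
  [forall x in A, forall y in A, ~~ e x y].

Definition alpha : nat := \max_(A : {set T} | independent A) #|A|.

Definition matching (M : {set {set T}}) : bool :=
  [forall m in M, exists x, exists y, e x y && (m == [set x; y])]
  && trivIset M.

Definition mu : nat := \max_(M : {set {set T}} | matching M) #|M|.

Definition KE : Prop := alpha + mu = #|T|.

Definition Omega : {set {set T}} :=
  [set A : {set T} | independent A && (#|A| == alpha)].

End Graphs.

Definition bigcapF (T : finType) (F : {set {set T}}) : {set T} :=
  \bigcap_(A in F) A.

Definition set_system (T : finType) (F : {set {set T}}) : Prop :=
  F != set0 /\ set0 \notin F.

Definition HKE (T : finType) (F : {set {set T}}) : Prop :=
  set_system F /\
  exists a : nat, 0 < a /\
    forall Gam : {set {set T}}, Gam != set0 -> Gam \subset F ->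
      #|cover Gam| + #|bigcapF Gam| = 2 * a.

(* there is a matching in G between X and Y: a matching M saturating every
   vertex of X, each matched to a vertex of Y (distinctness of partners is
   automatic since M is a matching) *)
Definition matching_between (T : finType) (e : rel T) (X Y : {set T}) : Prop :=
  exists M : {set {set T}}, matching e M /\
    forall x, x \in X -> exists2 y, y \in Y & [set x; y] \in M.

From mathcomp Require Import all_boot zify.
Set Implicit Arguments. Unset Strict Implicit. Unset Printing Implicit Defensive.

(* For a maximum independent set S, the graph is König–Egerváry iff a maximum
   matching matches every vertex outside S into S; this gives (1) => (2) with
   the family [set S].  For (3) => (1), only the HKE equation and the matching
   are used: removing S from F, the equation for F and F :\ S forces
   S :\: cover (F :\ S) and bigcapF (F :\ S) :\: S to have the same size, and
   maximality of S gives Hall's condition for a perfect matching between them.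
   Together with the given matching this yields a matching of the same kind for
   F :\ S; at a single S in Omega, a matching of ~: S into S has #|~: S| edges. *)

Section Hall.
Variables (T : finType) (r : rel T).
Implicit Types X Y A B C : {set T}.

Definition nbh (Y A : {set T}) : {set T} := [set y in Y | [exists x in A, r x y]].

Definition hall_condition (X Y : {set T}) : Prop :=
  forall A : {set T}, A \subset X -> #|A| <= #|nbh Y A|.

Definition matchable (X Y : {set T}) : Prop :=
  exists2 f : T -> T, {in X &, injective f} &
    forall x, x \in X -> f x \in Y /\ r x (f x).

Lemma nbh_sub Y A : nbh Y A \subset Y.
Proof. by apply/subsetP=> y; rewrite inE => /andP[]. Qed.

Lemma nbh_nbh Y A B : B \subset A -> nbh (nbh Y A) B = nbh Y B.
Proof.
move=> sBA; apply/setP=> y; rewrite !inE.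
have [/exists_inP[x xB rxy]|] := boolP [exists x in B, r x y]; last by rewrite !andbF.
rewrite !andbT; suff -> : [exists x in A, r x y] by rewrite andbT.
by apply/exists_inP; exists x => //; apply: (subsetP sBA).
Qed.

Lemma nbh_setU Y A B : nbh Y (A :|: B) \subset nbh (Y :\: nbh Y B) A :|: nbh Y B.
Proof.
apply/subsetP=> y; rewrite !inE => /andP[yY /exists_inP[x]].
rewrite yY /= andbT; case/setUP=> xAB rxy.
  by case: [exists x in B, r x y]; rewrite ?orbT ?orbF //; apply/exists_inP; exists x.
by apply/orP; right; apply/exists_inP; exists x.
Qed.

Lemma nbh_setD1 Y A y : nbh (Y :\ y) A = nbh Y A :\ y.
Proof. by apply/setP=> z; rewrite !inE andbA. Qed.

Lemma matchable_setU A B Y1 Y2 : [disjoint Y1 & Y2] ->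
  matchable A Y1 -> matchable B Y2 -> matchable (A :|: B) (Y1 :|: Y2).
Proof.
move=> dY [f injf fA] [g injg gB].
exists (fun x => if x \in A then f x else g x) => [x y xAB yAB|x].
  case: ifP => xA; case: ifP => yA; [exact: injf| | |].
  - move=> Efg; have [/(disjointFr dY)] := fA x xA; rewrite Efg.
    by case/setUP: yAB => [|/gB[->]]; rewrite ?yA.
  - move=> Egf; have [/(disjointFr dY)] := fA y yA; rewrite -Egf.
    by case/setUP: xAB => [|/gB[->]]; rewrite ?xA.
  - by apply: injg; [case/setUP: xAB; rewrite ?xA | case/setUP: yAB; rewrite ?yA].
case/setUP=> [xA|xB]; rewrite ?inE.
  by rewrite xA; have [-> ->] := fA x xA.
by case: ifP => [/fA|_]; [case=> -> -> | have [-> ->] := gB x xB]; rewrite ?orbT.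
Qed.

Lemma matchable1 x y : r x y -> matchable [set x] [set y].
Proof. by move=> rxy; exists (fun=> y) => [? ? /set1P-> /set1P->|_ /set1P->]; rewrite ?inE. Qed.

Section HallStep.
Variables (X Y : {set T}).
Hypothesis hallXY : hall_condition X Y.
Hypothesis IH : forall X' Y', #|X'| < #|X| -> hall_condition X' Y' -> matchable X' Y'.

(* A critical set [A] is matched into its own neighbourhood, the rest of [X] outside it. *)
Lemma hall_step_critical A : A != set0 -> A \proper X -> #|nbh Y A| <= #|A| ->
  matchable X Y.
Proof.
move=> A0 ltAX critA; have sAX := proper_sub ltAX.
have matchA : matchable A (nbh Y A).
  apply: IH => [|B sBA]; first exact: proper_card.
  by rewrite nbh_nbh //; apply: hallXY; apply: subset_trans sAX.
have matchXA : matchable (X :\: A) (Y :\: nbh Y A).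
  apply: IH => [|C sCXA].
    rewrite cardsD (setIidPr sAX).
    by have := proper_card ltAX; have := card_gt0 A; rewrite A0; lia.
  have dCA : [disjoint C & A] by move: sCXA; rewrite subsetD => /andP[].
  have := hallXY (A := C :|: A).
  rewrite subUset sAX (subset_trans sCXA (subsetDl _ _)) => /(_ isT).
  rewrite cardsU (disjoint_setI0 dCA) cards0 subn0.
  have := subset_leq_card (nbh_setU Y C A).
  have := leq_card_setU (nbh (Y :\: nbh Y A) C) (nbh Y A).
  by case; lia.
rewrite -(setID X A) (setIidPr sAX) -(setID Y (nbh Y A)) (setIidPr (nbh_sub _ _)).
apply: matchable_setU => //; rewrite disjoint_sym.
by have /subsetDP[] := subxx (Y :\: nbh Y A).
Qed.

Lemma hall_step_surplus :
  (forall A, A != set0 -> A \proper X -> #|A| < #|nbh Y A|) -> matchable X Y.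
Proof.
move=> surplus; have [->|[x xX]] := set_0Vmem X; first by exists id => // ?; rewrite inE.
have /card_gt0P[y] : 0 < #|nbh Y [set x]|.
  by apply: leq_trans (hallXY _); rewrite ?cards1 ?sub1set.
rewrite !inE => /andP[yY /exists_inP[_ /set1P-> rxy]].
have matchXx : matchable (X :\ x) (Y :\ y).
  apply: IH => [|C sCXx]; first by rewrite (cardsD1 x X) xX.
  have [->|C0] := eqVneq C set0; first by rewrite cards0.
  have := surplus C C0 (sub_proper_trans sCXx (properD1 xX)).
  by rewrite nbh_setD1 (cardsD1 y (nbh Y C)); case: (y \in _); lia.
rewrite -(setD1K xX) -(setD1K yY).
by apply: matchable_setU; rewrite ?disjoints1 ?setD11 //; apply: matchable1.
Qed.
End HallStep.

Theorem hall X Y : hall_condition X Y -> matchable X Y.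
Proof.
have [n] := ubnP #|X|; elim: n X Y => // n IH X Y /ltnSE leXn hallXY.
have IHX X' Y' : #|X'| < #|X| -> hall_condition X' Y' -> matchable X' Y'.
  by move=> ltX'; apply: IH; apply: leq_trans ltX' leXn.
have [/existsP[A /and3P[A0 ltAX critA]]|] :=
  boolP [exists A : {set T}, [&& A != set0, A \proper X & #|nbh Y A| <= #|A|]].
  exact: hall_step_critical hallXY IHX A A0 ltAX critA.
rewrite negb_exists => /forallP noncrit; apply: hall_step_surplus hallXY IHX _ => A A0 ltAX.
by have := noncrit A; rewrite A0 ltAX /= ltnNge.
Qed.
End Hall.

Section Graph.
Variables (T : finType) (e : rel T).
Implicit Types (A B Q R S X Y : {set T}) (M : {set {set T}}).

Lemma independentP S : reflect {in S &, forall x y, ~~ e x y} (independent e S).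
Proof.
apply: (iffP forall_inP) => [indS x y xS yS | indS x xS].
  by have /forall_inP := indS x xS; apply.
by apply/forall_inP => y; apply: indS.
Qed.

Lemma independentS A B : A \subset B -> independent e B -> independent e A.
Proof.
move=> sAB /independentP indB; apply/independentP => x y.
by move=> /(subsetP sAB) xB /(subsetP sAB); apply: indB.
Qed.

Lemma independentU A B : symmetric e -> independent e A -> independent e B ->
  {in A & B, forall x y, ~~ e x y} -> independent e (A :|: B).
Proof.
move=> e_sym /independentP indA /independentP indB AB; apply/independentP => x y.
case/setUP=> [xA|xB] /setUP[yA|yB]; [exact: indA | exact: AB | | exact: indB].
by rewrite e_sym; apply: AB.
Qed.

Lemma leq_card_alpha S : independent e S -> #|S| <= alpha e.
Proof. exact: (@leq_bigmax_cond _ (independent e) (fun A => #|A|)). Qed.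

Lemma leq_card_mu M : matching e M -> #|M| <= mu e.
Proof. exact: (@leq_bigmax_cond _ (matching e) (fun N => #|N|)). Qed.

Lemma OmegaP S : reflect (independent e S /\ #|S| = alpha e) (S \in Omega e).
Proof. by rewrite inE; apply: (iffP andP) => -[indS /eqP]. Qed.

Lemma Omega_witness : exists S, S \in Omega e.
Proof.
have indset0 : independent e set0 by apply/independentP => x; rewrite inE.
have [|S] := eq_bigmax_cond (fun A : {set T} => #|A|) (A := independent e).
  by apply/card_gt0P; exists set0.
by exists S; apply/OmegaP.
Qed.

Lemma alpha_gt0 : irreflexive e -> 0 < #|T| -> 0 < alpha e.
Proof.
move=> e_irr /card_gt0P[x _]; rewrite -(cards1 x) leq_card_alpha //.
by apply/independentP => y z /set1P-> /set1P->; rewrite e_irr.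
Qed.

Lemma matching_witness : exists2 M, matching e M & #|M| = mu e.
Proof.
have matchset0 : matching e set0.
  apply/andP; split; first by apply/forall_inP => m; rewrite inE.
  by apply/trivIsetP => m; rewrite inE.
have [|M] := eq_bigmax_cond (fun N : {set {set T}} => #|N|) (A := matching e).
  by apply/card_gt0P; exists set0.
by exists M.
Qed.

Lemma matching_edge M m : matching e M -> m \in M -> exists x y, e x y /\ m = [set x; y].
Proof.
by case/andP=> /forall_inP edgeM _ /edgeM /existsP[x /existsP[y /andP[exy /eqP->]]]; exists x, y.
Qed.

Lemma matching_trivIset M : matching e M -> trivIset M.
Proof. by case/andP. Qed.

Lemma matchingS M' M : M' \subset M -> matching e M -> matching e M'.
Proof.
move=> sM'M /andP[/forall_inP edgeM trivM]; apply/andP; split; last exact: trivIsetS trivM.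
by apply/forall_inP => m /(subsetP sM'M) /edgeM.
Qed.

Lemma matchingU M1 M2 : matching e M1 -> matching e M2 ->
  [disjoint cover M1 & cover M2] -> matching e (M1 :|: M2).
Proof.
move=> /andP[/forall_inP edgeM1 trivM1] /andP[/forall_inP edgeM2 trivM2] dM.
apply/andP; split; last exact: trivIsetU.
by apply/forall_inP => m /setUP[/edgeM1 | /edgeM2].
Qed.

(* Only the edges of each matching lying inside [Xi :|: Yi] are kept. *)
Lemma matching_betweenU X1 Y1 X2 Y2 : [disjoint X1 :|: Y1 & X2 :|: Y2] ->
  matching_between e X1 Y1 -> matching_between e X2 Y2 ->
  matching_between e (X1 :|: X2) (Y1 :|: Y2).
Proof.
move=> dXY [M1 [matchM1 satM1]] [M2 [matchM2 satM2]].
pose N1 := [set m in M1 | m \subset X1 :|: Y1].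
pose N2 := [set m in M2 | m \subset X2 :|: Y2].
have coverN1 : cover N1 \subset X1 :|: Y1 by apply/bigcupsP => m; rewrite inE => /andP[].
have coverN2 : cover N2 \subset X2 :|: Y2 by apply/bigcupsP => m; rewrite inE => /andP[].
exists (N1 :|: N2); split.
  apply: matchingU (disjointWl coverN1 (disjointWr coverN2 dXY)).
    by apply: matchingS matchM1; apply/subsetP => m; rewrite inE => /andP[].
  by apply: matchingS matchM2; apply/subsetP => m; rewrite inE => /andP[].
move=> x /setUP[xX1|xX2].
  have [y yY1 xyM1] := satM1 x xX1; exists y; first by rewrite inE yY1.
  by apply/setUP; left; rewrite inE xyM1 subUset !sub1set !inE xX1 yY1 orbT.
have [y yY2 xyM2] := satM2 x xX2; exists y; first by rewrite inE yY2 orbT.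
by apply/setUP; right; rewrite inE xyM2 subUset !sub1set !inE xX2 yY2 orbT.
Qed.

Lemma matching_between_of_matchable X Y : [disjoint X & Y] -> matchable e X Y ->
  #|Y| <= #|X| -> matching_between e Y X.
Proof.
move=> dXY [f injf fXY] leYX.
have imfX : f @: X = Y.
  apply/eqP; rewrite eqEcard card_in_imset // leYX andbT.
  by apply/subsetP => _ /imsetP[x xX ->]; case: (fXY x xX).
exists [set [set x; f x] | x in X]; split.
  apply/andP; split.
    apply/forall_inP => _ /imsetP[x xX ->]; apply/existsP; exists x; apply/existsP; exists (f x).
    by rewrite eqxx andbT; case: (fXY x xX).
  apply/trivIsetP => _ _ /imsetP[x xX ->] /imsetP[x' x'X ->] neq.
  have xx' : x != x' by apply: contraNneq neq => ->.
  have fxx' : f x != f x' by apply: contraNneq xx' => /injf ->.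
  have [fxY _] := fXY x xX; have [fx'Y _] := fXY x' x'X.
  rewrite -setI_eq0; apply/eqP/setP => z; rewrite !inE.
  apply/negbTE/negP => /andP[/orP[]/eqP-> /orP[]/eqP E].
  - by rewrite E eqxx in xx'.
  - by rewrite -E (disjointFr dXY xX) in fx'Y.
  - by rewrite E (disjointFr dXY x'X) in fxY.
  - by rewrite E eqxx in fxx'.
move=> y; rewrite -imfX => /imsetP[x xX ->]; exists x => //.
by apply/imsetP; exists x => //; rewrite setUC.
Qed.

Lemma matching_sub_pblock S M : independent e S -> matching e M ->
  M \subset pblock M @: (~: S).
Proof.
move=> /independentP indS matchM; apply/subsetP => m mM.
have [x [y [exy Em]]] := matching_edge matchM mM.
have [z zm zS] : exists2 z, z \in m & z \notin S.
  have [xS|xS] := boolP (x \in S); last by exists x; rewrite // Em !inE eqxx.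
  exists y; first by rewrite Em !inE eqxx orbT.
  by apply: contraL exy => yS; apply: indS.
by apply/imsetP; exists z; rewrite ?inE // (def_pblock (matching_trivIset matchM) mM zm).
Qed.

Lemma card_matching_le_compl S M : independent e S -> matching e M -> #|M| <= #|~: S|.
Proof.
move=> indS matchM; apply: leq_trans (leq_imset_card (pblock M) _).
exact/subset_leq_card/matching_sub_pblock.
Qed.

Lemma KE_of_matching_between S : independent e S -> matching_between e (~: S) S -> KE e.
Proof.
move=> indS [M [matchM satM]].
have [S0 /OmegaP[indS0 cardS0]] := Omega_witness.
have [M0 matchM0 cardM0] := matching_witness.
have coverM x : x \in ~: S -> x \in cover M.
  by case/satM=> y _ xyM; apply/bigcupP; exists [set x; y]; rewrite ?set21.
have inj_pblock : {in ~: S &, injective (pblock M)}.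
  move=> x x' xS x'S Exx'; have [y yS xyM] := satM x xS.
  have : x' \in [set x; y].
    by rewrite -(def_pblock (matching_trivIset matchM) xyM (set21 x y)) Exx' mem_pblock coverM.
  by case/set2P => // x'y; rewrite x'y inE yS in x'S.
have leSM : #|~: S| <= #|M|.
  rewrite -(card_in_imset inj_pblock); apply: subset_leq_card.
  by apply/subsetP => _ /imsetP[x /coverM xM ->]; apply: pblock_mem.
rewrite /KE; apply/eqP; rewrite eqn_leq; apply/andP; split.
  by rewrite -cardS0 -(cardsC S0) leq_add2l -cardM0 card_matching_le_compl.
by rewrite -(cardsC S) leq_add ?leq_card_alpha // (leq_trans leSM) ?leq_card_mu.
Qed.

Lemma matching_between_of_KE S : symmetric e -> irreflexive e -> KE e ->
  S \in Omega e -> matching_between e (~: S) S.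
Proof.
move=> e_sym e_irr KEe /OmegaP[indS cardS].
have [M matchM cardM] := matching_witness.
have cardSM : #|~: S| = #|M|.
  by apply/eqP; rewrite -(eqn_add2l #|S|) cardsC cardM cardS KEe.
have imM : pblock M @: (~: S) = M.
  apply/esym/eqP; rewrite eqEcard matching_sub_pblock //=.
  by rewrite -cardSM leq_imset_card.
have inj_pblock : {in ~: S &, injective (pblock M)} by apply/imset_injP; rewrite imM cardSM.
exists M; split => // x xS.
have xM : pblock M x \in M by rewrite -[in X in _ \in X]imM imset_f.
have xm : x \in pblock M x.
  rewrite mem_pblock; move: xM; rewrite /pblock; case: pickP => [A /andP[AM xA] _|_ /=].
    by apply/bigcupP; exists A.
  by case/(matching_edge matchM) => a [b [_ /setP/(_ a)]]; rewrite !inE eqxx.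
have [y exy Exy] : exists2 y, e x y & pblock M x = [set x; y].
  have [a [b [eab Eab]]] := matching_edge matchM xM.
  by move: xm; rewrite Eab => /set2P[->|->]; [exists b | exists a; rewrite 1?e_sym // setUC].
exists y; last by rewrite -Exy.
apply: contraT => yS; have ym : y \in pblock M x by rewrite Exy set22.
have := inj_pblock x y xS; rewrite inE (def_pblock (matching_trivIset matchM) xM ym).
move=> /(_ yS erefl) xy.
by rewrite xy e_irr in exy.
Qed.

Lemma hall_condition_of_Omega S Q R : symmetric e -> S \in Omega e ->
  independent e Q -> [disjoint Q & S] -> R \subset S ->
  {in Q & S :\: R, forall q s, ~~ e q s} -> hall_condition e Q R.
Proof.
move=> e_sym /OmegaP[indS cardS] indQ dQS sRS QSR B sBQ.
set N := nbh e R B; have sNS : N \subset S := subset_trans (nbh_sub _ _ _) sRS.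
have indSB : independent e ((S :\: N) :|: B).
  apply: independentU => //.
  - exact: independentS (subsetDl _ _) indS.
  - exact: independentS sBQ indQ.
  move=> s b; rewrite inE => /andP[sN sS] bB; have [sR|sR] := boolP (s \in R).
    by apply: contra sN => esb; rewrite inE sR; apply/exists_inP; exists b; rewrite // e_sym.
  by rewrite e_sym; apply: QSR; [exact: (subsetP sBQ)|rewrite inE sR].
have dSB : (S :\: N) :&: B = set0.
  apply/disjoint_setI0; rewrite disjoint_sym.
  exact: disjointWl sBQ (disjointWr (subsetDl _ _) dQS).
have := leq_card_alpha indSB; rewrite cardsU dSB cards0 subn0 cardsD (setIidPr sNS) -cardS.
by have := subset_leq_card sNS; lia.
Qed.

End Graph.

Section Families.
Variable T : finType.
Implicit Types (S : {set T}) (F G : {set {set T}}).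

Lemma cover_setD1 F S : S \in F -> cover F = S :|: cover (F :\ S).
Proof. by move=> SF; rewrite /cover (big_setD1 _ SF). Qed.

Lemma bigcapF_setD1 F S : S \in F -> bigcapF F = S :&: bigcapF (F :\ S).
Proof. by move=> SF; rewrite /bigcapF (big_setD1 _ SF). Qed.

Lemma HKE_set1 S : S != set0 -> HKE [set S].
Proof.
move=> S0; split; first by split; [apply/set0Pn; exists S; rewrite inE | rewrite inE eq_sym].
exists #|S|; split; first by rewrite card_gt0.
move=> G G0; rewrite subset1 (negbTE G0) orbF => /eqP->.
by rewrite cover1 /bigcapF big_set1 addnn mul2n.
Qed.

End Families.

Section Reduction.
Variables (T : finType) (e : rel T).
Hypothesis e_sym : symmetric e.
Implicit Types (S : {set T}) (F G : {set {set T}}).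

Lemma matching_between_setD1 F S : F \subset Omega e -> S \in F -> F :\ S != set0 ->
  #|cover F| + #|bigcapF F| = #|cover (F :\ S)| + #|bigcapF (F :\ S)| ->
  matching_between e (~: cover F) (bigcapF F) ->
  matching_between e (~: cover (F :\ S)) (bigcapF (F :\ S)).
Proof.
move=> sFO SF /set0Pn[S' S'F'] cardF.
have indF' S1 : S1 \in F :\ S -> independent e S1.
  by move=> /(subsetP (subsetDl _ _)) /(subsetP sFO) /OmegaP[].
rewrite (cover_setD1 SF) (bigcapF_setD1 SF) in cardF *.
set U := cover (F :\ S) in cardF *; set I := bigcapF (F :\ S) in cardF * => matchF.
have sIU : I \subset U.
  by apply: subset_trans (bigcup_sup _ S'F'); apply: bigcap_inf.
set R := S :\: U; set Q := I :\: S.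
have matchRQ : matching_between e R Q.
  apply: matching_between_of_matchable.
  - rewrite disjoint_sym; apply: disjointWr (subset_trans (subsetDl _ _) sIU) _.
    by have /subsetDP[] := subxx R.
  - apply: hall; apply: hall_condition_of_Omega (subsetP sFO S SF) _ _ (subsetDl _ _) _ => //.
    + by apply: independentS (indF' _ S'F'); apply: subset_trans (subsetDl _ _) (bigcap_inf _ S'F').
    + by have /subsetDP[] := subxx Q.
    move=> q s; rewrite !inE negb_and negbK => /andP[_ qI] /andP[/orP[sU|nsS] sS].
      have [S1 S1F' sS1] := bigcupP sU.
      have /independentP indS1 := indF' _ S1F'; apply: indS1 => //; exact: (bigcapP qI).
    by rewrite sS in nsS.
  - move: cardF; rewrite cardsU /R /Q !cardsD (setIC I S).
    have := subset_leq_card (subsetIl S U); have := subset_leq_card (subsetIr S U).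
    by have := subset_leq_card (subsetIr S I); lia.
have -> : ~: U = ~: (S :|: U) :|: R.
  by apply/setP => z; rewrite !inE; case: (z \in S); case: (z \in U).
have -> : I = (S :&: I) :|: Q by rewrite /Q setIC setID.
apply: matching_betweenU matchF matchRQ.
rewrite -setI_eq0; apply/eqP/setP => z; rewrite !inE.
by case zI: (z \in I); [rewrite (subsetP sIU z zI)|]; case: (z \in S); case: (z \in U).
Qed.

Lemma exists_matching_between_compl F c : F \subset Omega e -> F != set0 ->
  (forall G, G != set0 -> G \subset F -> #|cover G| + #|bigcapF G| = c) ->
  matching_between e (~: cover F) (bigcapF F) ->
  exists2 S, S \in F & matching_between e (~: S) S.
Proof.
have [n] := ubnP #|F|; elim: n F => // n IH F /ltnSE leFn sFO /set0Pn[S SF] cstF matchF.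
have [/eqP|F'0] := eqVneq (F :\ S) set0.
  rewrite setD_eq0 => sFS; have FS : F = [set S] by apply/eqP; rewrite eqEsubset sFS sub1set.
  by exists S => //; move: matchF; rewrite FS cover1 /bigcapF big_set1.
have sF'F : F :\ S \subset F := subsetDl _ _.
have [|||S' S'F' matchS'] := IH (F :\ S) _ (subset_trans sF'F sFO) F'0.
- by move: leFn; rewrite (cardsD1 S F) SF; lia.
- by move=> G G0 sGF'; apply: cstF G0 (subset_trans sGF' sF'F).
- apply: matching_between_setD1; rewrite // (cstF F) ?(cstF (F :\ S)) //.
  by apply/set0Pn; exists S.
by exists S' => //; apply: (subsetP sF'F).
Qed.

End Reduction.

Theorem corollary2p6 (T : finType) (e : rel T)
  (e_sym : symmetric e) (e_irr : irreflexive e) (T_nonempty : 0 < #|T|) :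
  [<-> KE e;
       (exists F : {set {set T}},
          [/\ HKE F, F \subset Omega e,
              matching_between e (~: cover F) (bigcapF F) &
              forall G1 G2 : {set {set T}},
                G1 != set0 -> G2 != set0 -> G1 \subset F -> G2 \subset F ->
                [disjoint G1 & G2] ->
                #|bigcapF G1 :\: cover G2| = #|bigcapF G2 :\: cover G1|]);
       (exists F : {set {set T}},
          [/\ HKE F, F \subset Omega e,
              matching_between e (~: cover F) (bigcapF F) &
              forall G1 G2 : {set {set T}},
                G1 != set0 -> G2 != set0 -> G1 \subset F -> G2 \subset F ->
                [disjoint G1 & G2] -> G1 :|: G2 = F ->
                #|bigcapF G1 :\: cover G2| = #|bigcapF G2 :\: cover G1|])].
Proof.
tfae.
- move=> KEe; have [S SO] := Omega_witness e.
  have S0 : S != set0.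
    by have /OmegaP[_ cardS] := SO; rewrite -card_gt0 cardS alpha_gt0.
  exists [set S]; split.
  + exact: HKE_set1.
  + by rewrite sub1set.
  + by rewrite cover1 /bigcapF big_set1; apply: matching_between_of_KE.
  + move=> G1 G2 G10 G20; rewrite !subset1 (negbTE G10) (negbTE G20) !orbF => /eqP-> /eqP->.
    by rewrite -setI_eq0 setIid => /eqP/setP/(_ S); rewrite !inE eqxx.
- by case=> F [HKEF sFO matchF disjF]; exists F; split => // G1 G2 *; apply: disjF.
- case=> F [[[F0 _] [a [_ cstF]]] sFO matchF _].
  have [S SF matchS] := exists_matching_between_compl e_sym sFO F0 cstF matchF.
  have /OmegaP[indS _] := subsetP sFO S SF.
  exact: KE_of_matching_between indS matchS.
Qed.
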